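(* Let $\mathcal D=(X,\mathcal P,\mathcal B)$ be a resolvable divisible design $RGD(r,\lambda,m)$ with $r=\lambda m$, and suppose that any two blocks from different parallel classes contain exactly $\lambda$ common points. Then the incidence graph $\mathrm{Inc}(\mathcal D)$ is a distance-regular bipartite antipodal cover of $K_{r,r}$ with diameter $4$ and antipodal blocks of size $m$.
   Context: A divisible design $GD(k,\lambda,n,kn)$ is a triple $(X,\mathcal P,\mathcal B)$ where $X$ is a set of $kn$ points, $\mathcal P$ is a partition of $X$ into classes of size $n$, and $\mathcal B$ is a collection of $k$-subsets of $X$ (blocks) such that each block meets every class in exactly one point and any two points from different classes are contained in exactly $\lambda$ blocks. It is resolvable, denoted $RGD(k,\lambda,n)$, if its set of blocks is partitioned into parallel classes, i.e. subsets of $\mathcal B$ each of which is a partition of $X$ (this partition is fixed). The incidence graph $\mathrm{Inc}(\mathcal D)$ has vertex set $X\cup\mathcal B$, a point $x$ being adjacent to a block $B$ iff $x\in B$. A graph is antipodal (of diameter $d$) if being at distance $0$ or $d$ is an equivalence relation; its classes are antipodal blocks. The graph is a cover of the quotient graph $\Sigma$ on the antipodal blocks (distinct blocks adjacent iff joined by an edge) if each vertex of a block $B$ has exactly one neighbour in each block adjacent to $B$. *)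

From mathcomp Require Import all_boot.
Set Implicit Arguments. Unset Strict Implicit. Unset Printing Implicit Defensive.

Section Graphs.
Variables (V : finType) (e : rel V).

Fixpoint ball (n : nat) (x : V) : {set V} :=
  if n is n'.+1 then ball n' x :|: [set z | [exists y in ball n' x, e y z]]
  else [set x].

(* graph distance; equals #|V| (a value never attained by a finite
   distance) when y is unreachable from x *)
Definition dist (x y : V) : nat := find (fun n => y \in ball n x) (iota 0 #|V|).

Definition connected : Prop := forall x y : V, connect e x y.

Definition has_diameter (d : nat) : Prop :=
  [/\ connected, (forall x y, dist x y <= d) & exists x y, dist x y = d].

Definition distance_regular : Prop :=
  connected /\
  exists b a c : nat -> nat, forall x y : V,
    [/\ #|[set z | e y z & dist x z == (dist x y).+1]| = b (dist x y),
        #|[set z | e y z & dist x z == dist x y]| = a (dist x y)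
      & 0 < dist x y -> #|[set z | e y z & dist x z == (dist x y).-1]| = c (dist x y)].

Definition bipartite : Prop := exists col : V -> bool, forall x y, e x y -> col x != col y.

Definition antipodal_rel (d : nat) : rel V := fun x y => (x == y) || (dist x y == d).

Definition antipodal (d : nat) : Prop :=
  has_diameter d /\ equivalence_rel (antipodal_rel d).

Definition antipodal_block (d : nat) (x : V) : {set V} := [set y | antipodal_rel d x y].

Definition antipodal_blocks (d : nat) : {set {set V}} :=
  [set antipodal_block d x | x : V].

Definition quot_adj (C D : {set V}) : bool :=
  (C != D) && [exists x in C, exists y in D, e x y].

Definition is_cover_of_quotient (d : nat) : Prop :=
  forall C D, C \in antipodal_blocks d -> D \in antipodal_blocks d ->
    quot_adj C D -> forall x, x \in C -> #|[set y in D | e x y]| = 1.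

End Graphs.

Definition Krr_side (r : nat) (u : ('I_r + 'I_r)%type) : bool :=
  if u is inl _ then true else false.
Definition Krr_adj (r : nat) : rel ('I_r + 'I_r)%type :=
  fun u v => Krr_side u != Krr_side v.

Definition quotient_iso_Krr (V : finType) (e : rel V) (d r : nat) : Prop :=
  exists f : {set V} -> ('I_r + 'I_r)%type,
    [/\ {in antipodal_blocks e d &, injective f},
        (forall u, exists2 C, C \in antipodal_blocks e d & f C = u)
      & {in antipodal_blocks e d &, forall C D, quot_adj e C D = Krr_adj (f C) (f D)}].

Definition antipodal_cover_of_Krr (V : finType) (e : rel V) (d r : nat) : Prop :=
  [/\ antipodal e d, is_cover_of_quotient e d & quotient_iso_Krr e d r].

(* points : type P (X = all of P), blocks : type B (an abstract index type,
   so that the block collection may a priori have repetitions), incidence inc *)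

Definition inc_graph (P B : finType) (inc : P -> B -> bool) : rel (P + B)%type :=
  fun u v => match u, v with
             | inl x, inr b => inc x b
             | inr b, inl x => inc x b
             | _, _ => false
             end.

Definition is_GD (P B : finType) (inc : P -> B -> bool) (Pcl : {set {set P}})
    (k lam n : nat) : Prop :=
  #|P| = k * n /\
  [/\ partition Pcl [set: P],
      (forall C, C \in Pcl -> #|C| = n),
      (forall b : B, #|[set x | inc x b]| = k),
      (forall (b : B) C, C \in Pcl -> #|[set x in C | inc x b]| = 1)
    & (forall x y : P, pblock Pcl x != pblock Pcl y ->
         #|[set b : B | inc x b && inc y b]| = lam)].

Definition is_resolution (P B : finType) (inc : P -> B -> bool)
    (Rcl : {set {set B}}) : Prop :=
  partition Rcl [set: B] /\
  forall R, R \in Rcl -> forall x : P, #|[set b in R | inc x b]| = 1.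

Definition is_RGD (P B : finType) (inc : P -> B -> bool) (Pcl : {set {set P}})
    (Rcl : {set {set B}}) (k lam n : nat) : Prop :=
  is_GD inc Pcl k lam n /\ is_resolution inc Rcl.

(* In Inc(D) the distance from a point x is 1 to the blocks through x, 2 to the
   points of the other classes (they share lam > 0 blocks with x), 3 to the
   remaining blocks and 4 to the other points of the class of x; so the number
   of neighbours one step closer to x is 1, lam, r - 1, r at distance 1, 2, 3, 4,
   whatever x is.  The hypotheses are self-dual: by double counting every point
   lies on r blocks and every parallel class has m blocks, so exchanging points
   and blocks, point classes and parallel classes gives again such a design, and
   the same distances hold from a block.  The antipodal classes are the point
   classes and the parallel classes; each vertex has exactly one neighbour in
   every class of the other side, which makes Inc(D) an m-fold cover of K_{r,r}. *)

From mathcomp Require Import all_boot zify.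
Set Implicit Arguments. Unset Strict Implicit. Unset Printing Implicit Defensive.

(** * Counting *)

Lemma card_sum_set (T1 T2 : finType) (p : pred (T1 + T2)) :
  #|[set z | p z]| = #|[set x | p (inl x)]| + #|[set y | p (inr y)]|.
Proof. by rewrite -!sum1dep_card big_sumType. Qed.

Lemma card_set_bij (T U : finType) (f : T -> U) (g : U -> T) (p : pred U) :
  cancel f g -> cancel g f -> #|[set z | p (f z)]| = #|[set w | p w]|.
Proof.
move=> fK gK; rewrite -[RHS](on_card_preimset (onW_bij _ (Bijective fK gK))).
by apply: eq_card => z; rewrite !inE.
Qed.

Lemma sum_card_rel (T U : finType) (R : T -> U -> bool) (A : {set T}) :
  (forall x y, R x y -> x \in A) ->
  \sum_(x in A) #|[set y | R x y]| = \sum_x \sum_y (R x y : nat).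
Proof.
move=> RA; rewrite big_mkcond; apply: eq_bigr => x _.
rewrite -sum1dep_card big_mkcond /=; case: ifP => xA.
  by apply: eq_bigr => y _; case: (R x y).
by rewrite big1 // => y _; case Rxy: (R x y); rewrite // (RA _ _ Rxy) in xA.
Qed.

Lemma double_count (T U : finType) (R : T -> U -> bool) (A : {set T}) (C : {set U}) a c :
  (forall x y, R x y -> (x \in A) && (y \in C)) ->
  (forall x, x \in A -> #|[set y | R x y]| = a) ->
  (forall y, y \in C -> #|[set x | R x y]| = c) ->
  #|A| * a = #|C| * c.
Proof.
move=> RAC Ra Rc; rewrite -!sum_nat_const.
rewrite (eq_bigr (fun x => #|[set y | R x y]|)) => [|x /Ra //].
rewrite [RHS](eq_bigr (fun y => #|[set x | R x y]|)) => [|y /Rc //].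
rewrite sum_card_rel => [|x y /RAC /andP[]//].
rewrite (@sum_card_rel _ _ (fun y x => R x y)) => [|y x /RAC /andP[]//].
exact: exchange_big.
Qed.

Definition is_inl (T1 T2 : Type) (u : T1 + T2) : bool := if u is inl _ then true else false.

Definition swap_sum (T1 T2 : Type) (u : T1 + T2) : T2 + T1 :=
  match u with inl a => inr a | inr b => inl b end.

Lemma swap_sumK (T1 T2 : Type) : cancel (@swap_sum T1 T2) (@swap_sum T2 T1).
Proof. by case. Qed.

Lemma exists_bij_ord (T : finType) (A : {set T}) n :
  0 < n -> #|A| = n ->
  exists f : T -> 'I_n, {in A &, injective f} /\ forall i, exists2 x, x \in A & f x = i.
Proof.
move=> n_gt0 cardA; have /card_gt0P[x0 x0A] : 0 < #|A| by rewrite cardA.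
exists (fun x => cast_ord cardA (enum_rank_in x0A x)); split.
  move=> x y xA yA /= /(congr1 (cast_ord (esym cardA))); rewrite !cast_ordK => Exy.
  by rewrite -(enum_rankK_in x0A xA) -(enum_rankK_in x0A yA) Exy.
move=> i; exists (enum_val (cast_ord (esym cardA) i)); first exact: enum_valP.
by rewrite enum_valK_in; apply: val_inj.
Qed.

(** * Distance layerings of finite graphs *)

Lemma find_leq_iota k s N : s <= k < s + N -> find (leq k) (iota s N) = k - s.
Proof.
elim: N s => [|N IH] s /andP[sk kN] /=; first by lia.
by case: leqP => ks; [lia | rewrite IH; lia].
Qed.

Section LevelFunction.
Variables (V : finType) (e : rel V) (x : V) (D : V -> nat).
Hypotheses (D_eq0 : forall y, (D y == 0) = (y == x))
  (D_step : forall y z, e y z -> D z <= (D y).+1)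
  (D_descent : forall y, 0 < D y -> exists2 z, e z y & D z = (D y).-1).

Lemma mem_ball_level n y : (y \in ball e n x) = (D y <= n).
Proof.
elim: n y => [|n IH] y /=; first by rewrite inE leqn0 D_eq0.
rewrite in_setU IH inE; apply/idP/idP.
  case/orP=> [/leqW //|/existsP[z /andP[zn ezy]]].
  by rewrite IH in zn; apply: leq_trans (D_step ezy) _.
rewrite leq_eqVlt ltnS => /orP[/eqP Dy|-> //]; apply/orP; right.
have [z ezy Dz] := D_descent (ltac:(by rewrite Dy) : 0 < D y).
by apply/existsP; exists z; rewrite IH Dz Dy ezy leqnn.
Qed.

Lemma dist_level y : D y < #|V| -> dist e x y = D y.
Proof.
move=> Dy; rewrite /dist (eq_find (a2 := leq (D y))) => [|n]; last by rewrite mem_ball_level.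
by rewrite find_leq_iota ?subn0.
Qed.

Lemma connect_level y : connect e x y.
Proof.
have: y \in ball e (D y) x by rewrite mem_ball_level.
move: (D y) => n; elim: n y => [|n IH] y /=; first by rewrite inE => /eqP->.
rewrite in_setU inE => /orP[/IH // | /existsP[z /andP[/IH xz ezy]]].
exact: connect_trans xz (connect1 ezy).
Qed.

End LevelFunction.

Record layering (V : finType) (e : rel V) (c : nat -> nat) (x : V) (D : V -> nat) :
  Prop := Layering {
  layer_eq0 : forall y, (D y == 0) = (y == x);
  layer_step : forall y z, e y z -> D z <= (D y).+1;
  layer_descent : forall y, 0 < D y -> exists2 z, e z y & D z = (D y).-1;
  layer_parity : forall y z, e y z -> D z != D y;
  card_layer_down : forall y, 0 < D y -> #|[set z | e y z & D z == (D y).-1]| = c (D y)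
}.

Section LayerCounting.
Variables (V : finType) (e : rel V) (c : nat -> nat) (x : V) (D : V -> nat).
Hypotheses (e_sym : symmetric e) (L : layering e c x D).

Lemma layer_nbr y z : e y z -> (D z == (D y).+1) || (D z == (D y).-1) && (0 < D y).
Proof.
move=> eyz; have := layer_step L eyz; rewrite e_sym in eyz.
by have := layer_step L eyz; have := layer_parity L eyz; lia.
Qed.

Lemma card_layer_same y : #|[set z | e y z & D z == D y]| = 0.
Proof.
apply/eqP; rewrite cards_eq0; apply/eqP/setP => z; rewrite !inE.
by apply/negbTE/andP => -[/(layer_parity L) /negPf ->].
Qed.

Lemma card_layer_up y :
  #|[set z | e y z & D z == (D y).+1]| =
  #|[set z | e y z]| - (if D y is 0 then 0 else c (D y)).
Proof.
rewrite -(cardsID [set z | D z == (D y).+1] [set z | e y z]).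
have -> : #|[set z | e y z] :&: [set z | D z == (D y).+1]| =
          #|[set z | e y z & D z == (D y).+1]|.
  by apply: eq_card => z; rewrite !inE.
suff -> : #|[set z | e y z] :\: [set z | D z == (D y).+1]| =
          (if D y is 0 then 0 else c (D y)) by rewrite addnK.
case: (posnP (D y)) => [Dy0|Dy_gt0].
  rewrite Dy0; apply/eqP; rewrite cards_eq0; apply/eqP/setP => z; rewrite !inE.
  by case eyz: (e y z); rewrite ?andbF //=; have := layer_nbr eyz; lia.
rewrite -(card_layer_down L Dy_gt0) -(prednK Dy_gt0); apply: eq_card => z; rewrite !inE.
by case eyz: (e y z); rewrite ?andbF //=; have := layer_nbr eyz; lia.
Qed.

End LayerCounting.

Lemma dist_layering (V : finType) (e : rel V) c x D y :
  layering e c x D -> D y < #|V| -> dist e x y = D y.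
Proof. by case=> D0 Dstep Ddesc _ _; apply: dist_level. Qed.

Lemma connected_layering (V : finType) (e : rel V) c (D : V -> V -> nat) :
  (forall x, layering e c x (D x)) -> connected e.
Proof. by move=> L x y; have [D0 Dstep Ddesc _ _] := L x; apply: connect_level. Qed.

Theorem distance_regular_layering (V : finType) (e : rel V) k c (D : V -> V -> nat) :
  symmetric e -> (forall y, #|[set z | e y z]| = k) ->
  (forall x y, D x y < #|V|) -> (forall x, layering e c x (D x)) ->
  distance_regular e.
Proof.
move=> e_sym deg D_lt L; split; first exact: connected_layering L.
exists (fun i => k - (if i is 0 then 0 else c i)), (fun=> 0), c => x y.
have distD z : dist e x z = D x z by apply: dist_layering (L x) (D_lt x z).
rewrite distD; split.
- rewrite -(deg y) -(card_layer_up e_sym (L x)); apply: eq_card => z.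
  by rewrite !inE distD.
- by rewrite -(card_layer_same (L x) y); apply: eq_card => z; rewrite !inE distD.
- move=> Dxy_gt0; rewrite -(card_layer_down (L x) Dxy_gt0); apply: eq_card => z.
  by rewrite !inE distD.
Qed.

Lemma layering_bij (V W : finType) (e : rel V) (e' : rel W) (f : V -> W) (g : W -> V)
    c x (D : V -> nat) (D' : W -> nat) :
  cancel f g -> cancel g f -> (forall u v, e' (f u) (f v) = e u v) ->
  (forall v, D' (f v) = D v) -> layering e' c (f x) D' -> layering e c x D.
Proof.
move=> fK gK ef DD' [D0 Dstep Ddesc Dpar Dcard]; split.
- by move=> y; rewrite -DD' D0 (can_eq fK).
- by move=> y z eyz; rewrite -!DD'; apply: Dstep; rewrite ef.
- move=> y; rewrite -DD' => /Ddesc[z' ez'y Dz']; exists (g z').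
    by rewrite -ef gK.
  by rewrite -!DD' gK.
- by move=> y z eyz; rewrite -!DD'; apply: Dpar; rewrite ef.
- move=> y; rewrite -!DD' => /Dcard <-.
  rewrite -(card_set_bij (fun w => e' (f y) w && (D' w == (D' (f y)).-1)) fK gK).
  by apply: eq_card => z; rewrite !inE ef !DD'.
Qed.

(** * Group divisible and resolvable designs *)

Record group_divisible (P B : finType) (inc : P -> B -> bool) (Pcl : {set {set P}})
    (k lam n : nat) : Prop := GroupDivisible {
  partition_classes : partition Pcl [set: P];
  card_class : forall C, C \in Pcl -> #|C| = n;
  card_block : forall b, #|[set x | inc x b]| = k;
  card_class_block : forall b C, C \in Pcl -> #|[set x in C | inc x b]| = 1;
  card_common_blocks : forall x y, pblock Pcl x != pblock Pcl y ->
    #|[set b | inc x b && inc y b]| = lam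
}.

Section GroupDivisibleDesign.
Variables (P B : finType) (inc : P -> B -> bool) (Pcl : {set {set P}}) (k lam n : nat).
Hypothesis G : group_divisible inc Pcl k lam n.

Lemma cover_classes x : x \in cover Pcl.
Proof. by rewrite (cover_partition (partition_classes G)) inE. Qed.

Lemma pblock_class x : pblock Pcl x \in Pcl.
Proof. exact: pblock_mem (cover_classes x). Qed.

Lemma mem_pblock_class x : x \in pblock Pcl x.
Proof. by rewrite mem_pblock cover_classes. Qed.

Lemma eq_pblock_class x y : (pblock Pcl x == pblock Pcl y) = (y \in pblock Pcl x).
Proof. exact: eq_pblock (partition_trivIset (partition_classes G)) (cover_classes x). Qed.

Lemma def_pblock_class x y : y \in pblock Pcl x -> pblock Pcl y = pblock Pcl x.
Proof. by rewrite -eq_pblock_class => /eqP. Qed.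

Lemma block_class_inj b x y :
  inc x b -> inc y b -> pblock Pcl x = pblock Pcl y -> x = y.
Proof.
move=> xb yb Exy; have /eqP/cards1P[z Ez] := card_class_block G b (pblock_class x).
have /setP Ez' := Ez; move: (Ez' x) (Ez' y).
by rewrite !inE {2}Exy !mem_pblock_class xb yb /= => /esym/eqP-> /esym/eqP->.
Qed.

Lemma exists_common_block x y :
  0 < lam -> pblock Pcl x != pblock Pcl y -> exists2 b, inc x b & inc y b.
Proof.
move=> lam_gt0 /(card_common_blocks G) card_xy.
have /card_gt0P[b] : 0 < #|[set b | inc x b && inc y b]| by rewrite card_xy.
by rewrite inE => /andP[]; exists b.
Qed.

Lemma card_block_off_class x b :
  #|[set y | inc y b & pblock Pcl y != pblock Pcl x]| = k.-1.
Proof.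
rewrite -(card_block G b) -(cardsID (pblock Pcl x) [set y | inc y b]).
have -> : #|[set y | inc y b] :&: pblock Pcl x| = 1.
  rewrite -(card_class_block G b (pblock_class x)); apply: eq_card => y.
  by rewrite !inE andbC.
by rewrite add1n /=; apply: eq_card => y; rewrite !inE andbC eq_sym eq_pblock_class.
Qed.

Lemma card_classes (b : B) : #|Pcl| = k.
Proof.
rewrite -(card_block G b) -(@card_in_imset _ _ (pblock Pcl)) => [|x y]; last first.
  by rewrite !inE => xb yb; apply: block_class_inj xb yb.
apply: eq_card => C; apply/idP/imsetP => [CP|[x _ ->]]; last exact: pblock_class.
have /card_gt0P[x] : 0 < #|[set x in C | inc x b]| by rewrite (card_class_block G).
rewrite inE => /andP[xC xb]; exists x; rewrite ?inE //.
by rewrite (def_pblock (partition_trivIset (partition_classes G)) CP xC).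
Qed.

End GroupDivisibleDesign.

Section ResolvableDesign.
Variables (P B : finType) (inc : P -> B -> bool) (Pcl : {set {set P}})
  (Rcl : {set {set B}}) (r lam m : nat).
Hypotheses (r_gt1 : 1 < r) (r_eq : r = lam * m) (card_points : #|P| = r * m)
  (G : group_divisible inc Pcl r lam m) (Rpart : partition Rcl [set: B])
  (card_parallel_block : forall R, R \in Rcl -> forall x, #|[set b in R | inc x b]| = 1)
  (card_common_points : forall b b', pblock Rcl b != pblock Rcl b' ->
     #|[set x | inc x b && inc x b']| = lam).

Lemma card_blocks_through x : #|[set b | inc x b]| = r.
Proof.
have count : #|[set b | inc x b]| * r.-1 = #|~: pblock Pcl x| * lam.
  apply: (@double_count _ _ (fun b y => [&& inc x b, inc y b & pblock Pcl y != pblock Pcl x])).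
  - by move=> b y /and3P[xb _ yx]; rewrite !inE xb -(eq_pblock_class G) eq_sym.
  - move=> b; rewrite inE => xb; rewrite -(card_block_off_class G x b).
    by apply: eq_card => y; rewrite !inE xb.
  - move=> y; rewrite !inE -(eq_pblock_class G) eq_sym => yx.
    by rewrite -(card_common_blocks G yx); apply: eq_card => b; rewrite !inE yx andbT andbC.
rewrite [#|~: _|]cardsCs setCK (card_class G (pblock_class G x)) card_points in count.
by move: count r_gt1; rewrite r_eq; nia.
Qed.

Lemma card_parallel_class R : R \in Rcl -> #|R| = m.
Proof.
move=> RP; have count : #|[set: P]| * 1 = #|R| * r.
  apply: (@double_count _ _ (fun x b => (b \in R) && inc x b)) => [x b /andP[bR _]|x _|b bR].
  - by rewrite in_setT.
  - by rewrite -(card_parallel_block RP x); apply: eq_card => b; rewrite !inE.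
  - by rewrite -(card_block G b); apply: eq_card => x; rewrite !inE bR.
by move: count r_gt1; rewrite cardsT card_points; nia.
Qed.

Lemma dual_group_divisible : group_divisible (fun b x => inc x b) Rcl r lam m.
Proof.
split=> //; [exact: card_parallel_class | exact: card_blocks_through |].
by move=> x R /card_parallel_block.
Qed.

End ResolvableDesign.

(** * Distances in the incidence graph *)

Definition inc_level (P B : finType) (inc : P -> B -> bool) (Pcl : {set {set P}})
    (Rcl : {set {set B}}) (u v : P + B) : nat :=
  match u, v with
  | inl x, inl y => if x == y then 0 else if pblock Pcl x == pblock Pcl y then 4 else 2
  | inl x, inr b | inr b, inl x => if inc x b then 1 else 3
  | inr b, inr b' => if b == b' then 0 else if pblock Rcl b == pblock Rcl b' then 4 else 2
  end.

(* With b_i = r - c_i this is the intersection array {r, r-1, r-lam, 1; 1, lam, r-1, r}. *)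
Definition inc_cnumber (r lam i : nat) : nat :=
  match i with 1 => 1 | 2 => lam | 3 => r.-1 | 4 => r | _ => 0 end.

Section PointLayering.
Variables (P B : finType) (inc : P -> B -> bool) (Pcl : {set {set P}})
  (Rcl : {set {set B}}) (r lam m : nat).
Hypotheses (lam_gt0 : 0 < lam) (r_gt1 : 1 < r) (G : group_divisible inc Pcl r lam m)
  (replication : forall x, #|[set b | inc x b]| = r).
Variable x : P.

Local Notation e := (inc_graph inc).
Local Notation D := (inc_level inc Pcl Rcl (inl x)).

Lemma point_level_step y z : e y z -> D z <= (D y).+1.
Proof.
case: y => [y|b]; case: z => [z|b'] //= yz.
  by case: eqP => [->|_]; [rewrite yz | case: ifP; case: ifP].
case xb: (inc x b); case: eqP => // xz; case: eqP => // Exz.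
by case: xz; exact: (block_class_inj G xb yz Exz).
Qed.

Lemma point_level_descent y : 0 < D y -> exists2 z, e z y & D z = (D y).-1.
Proof.
case: y => [y|b] /=.
  case: eqP => // xy; case: eqP => [Exy|/eqP Exy] _.
    have /card_gt0P[b] : 0 < #|[set b | inc y b]| by rewrite replication; lia.
    rewrite inE => yb; exists (inr b) => //=; case: ifP => // xb.
    by case: xy; exact: (block_class_inj G xb yb Exy).
  by have [b xb yb] := exists_common_block G lam_gt0 Exy; exists (inr b); rewrite /= ?xb.
case: ifP => xb _; first by exists (inl x); rewrite /= ?eqxx.
have /card_gt0P[z] : 0 < #|[set y | inc y b & pblock Pcl y != pblock Pcl x]|.
  by rewrite (card_block_off_class G); lia.
rewrite inE => /andP[zb zx]; exists (inl z) => //=.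
by rewrite [_ == pblock Pcl z]eq_sym (negbTE zx); case: eqP => // xz; rewrite xz eqxx in zx.
Qed.

Lemma card_point_level_down y :
  0 < D y -> #|[set z | e y z & D z == (D y).-1]| = inc_cnumber r lam (D y).
Proof.
case: y => [y|b]; rewrite card_sum_set /=.
  case: eqP => // xy; case: eqP => [Exy|/eqP Exy] _ /=; rewrite cards0 add0n.
    rewrite -(replication y); apply: eq_card => b; rewrite !inE.
    case yb: (inc y b); case: ifP => //= xb.
    by case: xy; exact: (block_class_inj G xb yb Exy).
  rewrite -(card_common_blocks G Exy); apply: eq_card => b; rewrite !inE andbC.
  by case: (inc x b); rewrite ?andbF.
case: ifP => xb _ /=; rewrite cards0 addn0.
  apply/eqP/cards1P; exists x; apply/setP => z; rewrite !inE.
  case: (eqVneq x z) => [<-|xz]; first by rewrite xb eqxx.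
  by case: ifP; rewrite andbF.
rewrite -(card_block_off_class G x b); apply: eq_card => z; rewrite !inE.
case: (eqVneq x z) => [<-|_]; first by rewrite eqxx andbF.
by rewrite [pblock Pcl z == _]eq_sym; case: ifP.
Qed.

Lemma point_layering : layering e (inc_cnumber r lam) (inl x) D.
Proof.
split.
- case=> [y|b] /=; last by case: ifP.
  rewrite -[inl y == _]/(y == x) eq_sym.
  by case: (eqVneq x y) => //; case: ifP.
- exact: point_level_step.
- exact: point_level_descent.
- by case=> [y|b] [z|b'] //= _; do !case: ifP.
- exact: card_point_level_down.
Qed.

End PointLayering.

Definition inc_class (P B : finType) (Pcl : {set {set P}}) (Rcl : {set {set B}})
    (u : P + B) : {set P} + {set B} :=
  match u with inl x => inl (pblock Pcl x) | inr b => inr (pblock Rcl b) end.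

Lemma inc_level_le4 (P B : finType) (inc : P -> B -> bool) Pcl Rcl (u v : P + B) :
  inc_level inc Pcl Rcl u v <= 4.
Proof. by case: u => ?; case: v => ? /=; do !case: ifP. Qed.

Lemma inc_graph_is_inl (P B : finType) (inc : P -> B -> bool) (u v : P + B) :
  inc_graph inc u v -> is_inl u != is_inl v.
Proof. by case: u; case: v. Qed.

Section SelfDualIncidenceGraph.
Variables (P B : finType) (inc : P -> B -> bool) (Pcl : {set {set P}})
  (Rcl : {set {set B}}) (r lam m : nat).
Hypotheses (m_gt1 : 1 < m) (lam_gt0 : 0 < lam) (r_eq : r = lam * m)
  (card_points : #|P| = r * m)
  (G : group_divisible inc Pcl r lam m)
  (G' : group_divisible (fun b x => inc x b) Rcl r lam m).

Local Notation e := (inc_graph inc).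
Local Notation D := (inc_level inc Pcl Rcl).

Let r_gt1 : 1 < r. Proof. by rewrite r_eq; nia. Qed.

Lemma inc_layering u : layering e (inc_cnumber r lam) u (D u).
Proof.
case: u => [x|b]; first exact: (point_layering Rcl lam_gt0 r_gt1 G (card_block G') x).
apply: (layering_bij (x := inr b) (@swap_sumK P B) (@swap_sumK B P) _ _
  (point_layering Pcl lam_gt0 r_gt1 G' (card_block G) b)) => [[x|b'] [y|b'']|[y|b']] //.
Qed.

Lemma inc_level_lt_card u v : D u v < #|{: P + B}|.
Proof.
have /card_gt0P[x _] : 0 < #|P| by rewrite card_points; nia.
have /card_gt0P[b _] : 0 < #|[set b | inc x b]| by rewrite (card_block G'); lia.
have : 0 < #|B| by apply/card_gt0P; exists b.
by have := inc_level_le4 inc Pcl Rcl u v; rewrite card_sum card_points; nia.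
Qed.

Lemma dist_inc_graph u v : dist e u v = D u v.
Proof. exact: dist_layering (inc_layering u) (inc_level_lt_card u v). Qed.

Lemma inc_graph_sym : symmetric e.
Proof. by case=> ? [] ?. Qed.

Lemma card_inc_graph_nbrs u : #|[set v | e u v]| = r.
Proof.
rewrite card_sum_set; case: u => [x|b] /=; rewrite cards0 ?add0n ?addn0.
  exact: (card_block G').
exact: (card_block G).
Qed.

Lemma antipodal_rel_inc_graph u v :
  antipodal_rel e 4 u v = (inc_class Pcl Rcl u == inc_class Pcl Rcl v).
Proof.
rewrite /antipodal_rel dist_inc_graph; case: u => [x|b]; case: v => [y|b'] /=;
  try by case: ifP.
  rewrite -[inl x == _]/(x == y) -[inl _ == _]/(pblock Pcl x == pblock Pcl y).
  by case: (eqVneq x y) => [->|_]; rewrite ?eqxx //=; case: ifP.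
rewrite -[inr b == _]/(b == b') -[inr _ == _]/(pblock Rcl b == pblock Rcl b').
by case: (eqVneq b b') => [->|_]; rewrite ?eqxx //=; case: ifP.
Qed.

Lemma antipodal_block_inc_graph v :
  antipodal_block e 4 v = [set w | inc_class Pcl Rcl v == inc_class Pcl Rcl w].
Proof. by apply/setP => w; rewrite !inE antipodal_rel_inc_graph. Qed.

Lemma card_antipodal_block_inc_graph v : #|antipodal_block e 4 v| = m.
Proof.
rewrite antipodal_block_inc_graph card_sum_set; case: v => [x|b] /=.
  rewrite cards0 addn0 -(card_class G (pblock_class G x)); apply: eq_card => y.
  by rewrite inE -[inl _ == _]/(pblock Pcl x == pblock Pcl y) (eq_pblock_class G).
rewrite cards0 add0n -(card_class G' (pblock_class G' b)); apply: eq_card => b'.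
by rewrite inE -[inr _ == _]/(pblock Rcl b == pblock Rcl b') (eq_pblock_class G').
Qed.

Lemma has_diameter_inc_graph : has_diameter e 4.
Proof.
split; first exact: connected_layering inc_layering.
  by move=> u v; rewrite dist_inc_graph inc_level_le4.
have /card_gt0P[x0 _] : 0 < #|P| by rewrite card_points; nia.
have /card_gt1P[x [y [xC yC xy]]] : 1 < #|pblock Pcl x0|.
  by rewrite (card_class G (pblock_class G x0)).
exists (inl x), (inl y); rewrite dist_inc_graph /= (negbTE xy).
by rewrite (def_pblock_class G xC) (def_pblock_class G yC) eqxx.
Qed.

Lemma antipodal_inc_graph : antipodal e 4.
Proof.
split; first exact: has_diameter_inc_graph.
by move=> u v w; rewrite !antipodal_rel_inc_graph eqxx; split=> // /eqP->.
Qed.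

Lemma quot_adj_inc_graph v v' :
  quot_adj e (antipodal_block e 4 v) (antipodal_block e 4 v') = (is_inl v != is_inl v').
Proof.
have side_class w w' : inc_class Pcl Rcl w == inc_class Pcl Rcl w' -> is_inl w = is_inl w'.
  by case: w; case: w'.
rewrite /quot_adj !antipodal_block_inc_graph.
case: (boolP (is_inl v != is_inl v')) => [|/negPn/eqP side_eq]; last first.
  apply/negbTE; rewrite negb_and; apply/orP; right.
  apply/existsP => -[w /andP[wv /existsP[w' /andP[w'v' /inc_graph_is_inl]]]].
  by rewrite !inE in wv w'v'; rewrite -(side_class _ _ wv) -(side_class _ _ w'v') side_eq eqxx.
case: v => [x|b]; case: v' => [y|b'] //= _; apply/andP; split.
- by apply/eqP => /setP/(_ (inl x)); rewrite !inE eqxx.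
- have /card_gt0P[b] : 0 < #|[set b in pblock Rcl b' | inc x b]|.
    by rewrite (card_class_block G' x (pblock_class G' b')).
  rewrite inE => /andP[bb' xb]; apply/existsP; exists (inl x); rewrite inE eqxx /=.
  apply/existsP; exists (inr b); rewrite inE xb andbT.
  by rewrite -[inr _ == _]/(pblock Rcl b' == pblock Rcl b) (eq_pblock_class G').
- by apply/eqP => /setP/(_ (inr b)); rewrite !inE eqxx.
- have /card_gt0P[x] : 0 < #|[set x in pblock Pcl y | inc x b]|.
    by rewrite (card_class_block G b (pblock_class G y)).
  rewrite inE => /andP[xy xb]; apply/existsP; exists (inr b); rewrite inE eqxx /=.
  apply/existsP; exists (inl x); rewrite inE xb andbT.
  by rewrite -[inl _ == _]/(pblock Pcl y == pblock Pcl x) (eq_pblock_class G).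
Qed.

Lemma cover_inc_graph : is_cover_of_quotient e 4.
Proof.
move=> _ _ /imsetP[v _ ->] /imsetP[v' _ ->]; rewrite quot_adj_inc_graph => side_ne w.
rewrite !antipodal_block_inc_graph inE.
rewrite (eq_card (B := [set u | e w u & inc_class Pcl Rcl v' == inc_class Pcl Rcl u]));
  last by move=> u; rewrite !inE andbC.
rewrite card_sum_set; case: v side_ne => [x|b]; case: v' => [y|b'] //= _;
  case: w => [z|c] //= _.
  rewrite cards0 add0n -(card_class_block G' z (pblock_class G' b')).
  apply: eq_card => b; rewrite !inE.
  by rewrite -[inr _ == _]/(pblock Rcl b' == pblock Rcl b) (eq_pblock_class G') andbC.
rewrite cards0 addn0 -(card_class_block G c (pblock_class G y)).
apply: eq_card => x; rewrite !inE andbC.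
by rewrite -[inl _ == _]/(pblock Pcl y == pblock Pcl x) (eq_pblock_class G).
Qed.

Lemma quotient_iso_Krr_inc_graph : quotient_iso_Krr e 4 r.
Proof.
have r_gt0 : 0 < r by lia.
have /card_gt0P[x0 _] : 0 < #|P| by rewrite card_points; nia.
have /card_gt0P[b0 _] : 0 < #|[set b | inc x0 b]| by rewrite (card_block G').
have [fP [fP_inj fP_onto]] := exists_bij_ord r_gt0 (card_classes G b0).
have [fR [fR_inj fR_onto]] := exists_bij_ord r_gt0 (card_classes G' x0).
pose idx (k : {set P} + {set B}) : 'I_r + 'I_r :=
  match k with inl C => inl (fP C) | inr R => inr (fR R) end.
pose f (A : {set P + B}) := if [pick w in A] is Some w then idx (inc_class Pcl Rcl w)
  else inl (Ordinal r_gt0).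
have fE v : f (antipodal_block e 4 v) = idx (inc_class Pcl Rcl v).
  rewrite /f; case: pickP => [w|/(_ v)]; rewrite antipodal_block_inc_graph inE ?eqxx //.
  by move/eqP->.
exists f; split.
- move=> _ _ /imsetP[v _ ->] /imsetP[v' _ ->]; rewrite !fE !antipodal_block_inc_graph.
  case: v => [x|b]; case: v' => [y|b'] //= [].
    by move/fP_inj => /(_ (pblock_class G x) (pblock_class G y)) ->.
  by move/fR_inj => /(_ (pblock_class G' b) (pblock_class G' b')) ->.
- case=> i; [have [C CP <-] := fP_onto i | have [R RR <-] := fR_onto i].
    have /card_gt0P[x xC] : 0 < #|C| by rewrite (card_class G CP); lia.
    exists (antipodal_block e 4 (inl x)); first exact: imset_f.
    by rewrite fE /= (def_pblock (partition_trivIset (partition_classes G)) CP xC).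
  have /card_gt0P[b bR] : 0 < #|R| by rewrite (card_class G' RR); lia.
  exists (antipodal_block e 4 (inr b)); first exact: imset_f.
  by rewrite fE /= (def_pblock (partition_trivIset (partition_classes G')) RR bR).
- move=> _ _ /imsetP[v _ ->] /imsetP[v' _ ->].
  by rewrite !fE quot_adj_inc_graph; case: v; case: v'.
Qed.

Theorem inc_graph_antipodal_cover_Krr :
  [/\ distance_regular e, bipartite e, antipodal_cover_of_Krr e 4 r, has_diameter e 4
    & forall v, #|antipodal_block e 4 v| = m].
Proof.
split.
- exact: (distance_regular_layering inc_graph_sym card_inc_graph_nbrs
    inc_level_lt_card inc_layering).
- by exists (@is_inl P B) => u v /inc_graph_is_inl.
- split; [exact: antipodal_inc_graph | exact: cover_inc_graph |
          exact: quotient_iso_Krr_inc_graph].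
- exact: has_diameter_inc_graph.
- exact: card_antipodal_block_inc_graph.
Qed.

End SelfDualIncidenceGraph.

Theorem lemma2p2 (P B : finType) (inc : P -> B -> bool)
    (Pcl : {set {set P}}) (Rcl : {set {set B}}) (r lam m : nat) :
  1 < m -> 0 < lam ->
  r = lam * m ->
  is_RGD inc Pcl Rcl r lam m ->
  (forall b b' : B, pblock Rcl b != pblock Rcl b' ->
     #|[set x : P | inc x b && inc x b']| = lam) ->
  [/\ distance_regular (inc_graph inc),
      bipartite (inc_graph inc),
      antipodal_cover_of_Krr (inc_graph inc) 4 r,
      has_diameter (inc_graph inc) 4
    & forall v, #|antipodal_block (inc_graph inc) 4 v| = m].
Proof.
move=> m_gt1 lam_gt0 r_eq [[card_points [Ppart card_cl card_bl card_clbl card_cb]]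
  [Rpart card_parallel_block]] card_common_points.
have G : group_divisible inc Pcl r lam m by [].
have r_gt1 : 1 < r by rewrite r_eq; nia.
have G' := dual_group_divisible r_gt1 r_eq card_points G Rpart card_parallel_block
  card_common_points.
exact: inc_graph_antipodal_cover_Krr m_gt1 lam_gt0 r_eq card_points G G'.
Qed.
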